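(* Assume (A1) and (A2), and let $\sigma,\sigma'>0$, $\bar Z\in\mathcal{Z}^\sigma_\star$, and $\bar H\in\mathcal{C}(\bar Z)$, with $\bar Z'$ and $\bar H'$ as defined in the context. Then $$\Pi_+'(\bar Z';\bar H')=\Pi_+'(\bar Z;\bar H),\qquad \Pi_-'(\bar Z';\bar H')=\frac{\sigma'}{\sigma}\,\Pi_-'(\bar Z;\bar H).$$
   Context: Notation: $\mathbb{S}^n$ is the space of real symmetric $n\times n$ matrices with $\langle A,B\rangle=\mathrm{tr}(AB)$. $\Pi_+$, $\Pi_-$ are the orthogonal projections onto the PSD and NSD cones, and $F'(Z;H):=\lim_{t\downarrow0}(F(Z+tH)-F(Z))/t$ for $F\in\{\Pi_+,\Pi_-\}$. SDP data $C,A_1,\dots,A_m\in\mathbb{S}^n$, $b\in\mathbb{R}^m$ define $\mathcal{A}X:=(\langle A_i,X\rangle)_i$ and $\mathcal{A}^*y:=\sum_iy_iA_i$. A KKT point is $(X,y,S)$ with $\mathcal{A}X=b$, $\mathcal{A}^*y+S=C$, $X,S\succeq0$, $\langle X,S\rangle=0$. $\mathcal{X}_\star$, $\mathcal{S}_\star$ are the sets of $X$, resp. $S$, in KKT points. (A1) $\mathcal{A}$ is surjective. (A2) Some KKT point $(X_{sc},y_{sc},S_{sc})$ has $\mathrm{rank}X_{sc}+\mathrm{rank}S_{sc}=n$. Let $\mathcal{P}:=\mathcal{A}^*(\mathcal{A}\mathcal{A}^* )^{-1}\mathcal{A}$ and $\mathcal{P}^\perp:=\mathrm{Id}-\mathcal{P}$.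 For $\tau>0$ let $\mathcal{Z}^\tau_\star:=\{X-\tau S:X\in\mathcal{X}_\star,S\in\mathcal{S}_\star\}$. For such $\bar Z$ let $\delta'(\bar Z;H):=-\mathcal{P}\Pi_+'(\bar Z;H)-\mathcal{P}^\perp\Pi_-'(\bar Z;H)$ and $\mathcal{C}(\bar Z):=\{H:\delta'(\bar Z;H)=0\}$. Given $\bar Z\in\mathcal{Z}^\sigma_\star$, let $\bar X:=\Pi_+(\bar Z)$ and $\bar S:=-\sigma^{-1}\Pi_-(\bar Z)$, and define $$\bar Z':=\bar X-\sigma'\bar S,\qquad \bar H':=\Pi_+'(\bar Z;\bar H)+\frac{\sigma'}{\sigma}\Pi_-'(\bar Z;\bar H).$$ *)

From HB Require Import structures.
From mathcomp Require Import all_boot all_order all_algebra.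
From mathcomp Require Import all_classical all_reals all_analysis.
Set Implicit Arguments. Unset Strict Implicit. Unset Printing Implicit Defensive.
Import Order.TTheory GRing.Theory Num.Theory.
Import numFieldNormedType.Exports.
Local Open Scope classical_set_scope.
Local Open Scope ring_scope.

Section SDPDefs.
Variables (R : realType) (n m : nat).

Definition symmx (X : 'M[R]_n) : Prop := X^T = X.

Definition psd (X : 'M[R]_n) : Prop :=
  symmx X /\ forall v : 'cV[R]_n, 0 <= (v^T *m X *m v) 0 0.
Definition nsd (X : 'M[R]_n) : Prop := psd (- X).

Definition mxdot (A B : 'M[R]_n) : R := \tr (A *m B).
Definition frob2 (A : 'M[R]_n) : R := \tr (A^T *m A).

Definition is_proj (K : set 'M[R]_n) (Z X : 'M[R]_n) : Prop :=
  K X /\ forall Y, K Y -> frob2 (Z - X) <= frob2 (Z - Y).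

Definition PiP (Z : 'M[R]_n) : 'M[R]_n := xget 0 [set X | is_proj psd Z X].
Definition PiN (Z : 'M[R]_n) : 'M[R]_n := xget 0 [set X | is_proj nsd Z X].

(* D is the directional derivative F'(Z;H) = lim_{t -> 0+} (F(Z+tH)-F(Z))/t
   (entrywise convergence, equivalent to convergence in any norm) *)
Definition is_dirder (F : 'M[R]_n -> 'M[R]_n) (Z H D : 'M[R]_n) : Prop :=
  forall i j : 'I_n,
    (t^-1 *: (F (Z + t *: H) - F Z)) i j @[t --> (0:R)^'+] --> D i j.

(* SDP data: As : 'I_m -> 'M_n are A_1..A_m *)
Definition Aop (As : 'I_m -> 'M[R]_n) (X : 'M[R]_n) : 'cV[R]_m :=
  \col_i mxdot (As i) X.
Definition Aadj (As : 'I_m -> 'M[R]_n) (y : 'cV[R]_m) : 'M[R]_n :=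
  \sum_i y i 0 *: As i.

Definition is_KKT (C : 'M[R]_n) (As : 'I_m -> 'M[R]_n) (b : 'cV[R]_m)
  (X : 'M[R]_n) (y : 'cV[R]_m) (S : 'M[R]_n) : Prop :=
  [/\ Aop As X = b, Aadj As y + S = C, psd X, psd S & mxdot X S = 0].

Definition Xstar C As b : set 'M[R]_n := [set X | exists y S, is_KKT C As b X y S].
Definition Sstar C As b : set 'M[R]_n := [set S | exists X y, is_KKT C As b X y S].

Definition Zstar C As b (tau : R) : set 'M[R]_n :=
  [set Z | exists X S, [/\ Xstar C As b X, Sstar C As b S & Z = X - tau *: S]].

Definition A_surj (As : 'I_m -> 'M[R]_n) : Prop :=
  forall c : 'cV[R]_m, exists X, symmx X /\ Aop As X = c.

Definition strict_compl C As b : Prop :=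
  exists X y S, is_KKT C As b X y S /\ (\rank X + \rank S = n)%N.

Definition gram (As : 'I_m -> 'M[R]_n) : 'M[R]_m :=
  \matrix_(i, j) mxdot (As i) (As j).
Definition Pop (As : 'I_m -> 'M[R]_n) (H : 'M[R]_n) : 'M[R]_n :=
  Aadj As (invmx (gram As) *m Aop As H).
Definition Pperp (As : 'I_m -> 'M[R]_n) (H : 'M[R]_n) : 'M[R]_n := H - Pop As H.

End SDPDefs.

From HB Require Import structures.
From mathcomp Require Import all_boot all_order all_algebra.
From mathcomp Require Import all_classical all_reals all_analysis.
From mathcomp Require Import ring lra.
Import Order.TTheory GRing.Theory Num.Theory.
Import numFieldNormedType.Exports.
Set Implicit Arguments. Unset Strict Implicit. Unset Printing Implicit Defensive.
Local Open Scope classical_set_scope.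
Local Open Scope ring_scope.

(* Put r := sigma'/sigma, so that
   Z' = Pi_+(Z) + r Pi_-(Z), and follow the curve
   V_t := Pi_+(Z + tH) + r Pi_-(Z + tH), which satisfies V_t = Z' + tH' + o(t).
   By the Moreau decomposition Pi_-(Y) = Y - Pi_+(Y) and the variational
   characterisation of projections onto closed convex cones, rescaling the
   normal component does not move the projections:
   Pi_+(V_t) = Pi_+(Z + tH) and Pi_-(V_t) = r Pi_-(Z + tH).  Projections are
   nonexpansive, so Pi_(+/-)(Z' + tH') = Pi_(+/-)(V_t) + o(t), and the two
   directional derivatives at Z' along H' are read off along V_t.
   The self-duality of the PSD cone behind the Moreau decomposition comes from
   writing a PSD matrix as a sum of rank-one matrices v v^T, by repeatedly
   deflating a nonzero diagonal entry; the projections exist by compactness. *)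

Section FrobeniusProduct.
Variables (R : realType) (n : nat).
Implicit Types A B C : 'M[R]_n.

Definition frob_dot A B : R := \tr (A^T *m B).

Lemma frob_dotE A B : frob_dot A B = \sum_i \sum_j A i j * B i j.
Proof.
rewrite /frob_dot /mxtrace exchange_big; apply: eq_bigr => j _.
by rewrite mxE; apply: eq_bigr => i _; rewrite mxE.
Qed.

Lemma frob2E A : frob2 A = frob_dot A A. Proof. by []. Qed.

Lemma frob_dotC A B : frob_dot A B = frob_dot B A.
Proof. by rewrite /frob_dot -mxtrace_tr trmx_mul trmxK. Qed.

Lemma frob_dotDl A B C : frob_dot (A + B) C = frob_dot A C + frob_dot B C.
Proof. by rewrite /frob_dot linearD mulmxDl mxtraceD. Qed.

Lemma frob_dotZl c A B : frob_dot (c *: A) B = c * frob_dot A B.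
Proof. by rewrite /frob_dot linearZ -scalemxAl mxtraceZ. Qed.

Lemma frob_dotNl A B : frob_dot (- A) B = - frob_dot A B.
Proof. by rewrite -scaleN1r frob_dotZl mulN1r. Qed.

Lemma frob_dotBl A B C : frob_dot (A - B) C = frob_dot A C - frob_dot B C.
Proof. by rewrite frob_dotDl frob_dotNl. Qed.

Lemma frob_dotDr A B C : frob_dot A (B + C) = frob_dot A B + frob_dot A C.
Proof. by rewrite frob_dotC frob_dotDl !(frob_dotC A). Qed.

Lemma frob_dotZr c A B : frob_dot A (c *: B) = c * frob_dot A B.
Proof. by rewrite frob_dotC frob_dotZl frob_dotC. Qed.

Lemma frob_dotNr A B : frob_dot A (- B) = - frob_dot A B.
Proof. by rewrite frob_dotC frob_dotNl frob_dotC. Qed.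

Lemma frob_dotBr A B C : frob_dot A (B - C) = frob_dot A B - frob_dot A C.
Proof. by rewrite frob_dotDr frob_dotNr. Qed.

Lemma frob_dot0l A : frob_dot 0 A = 0.
Proof. by rewrite -(scale0r 0) frob_dotZl mul0r. Qed.

Lemma frob2_ge0 A : 0 <= frob2 A.
Proof.
by rewrite frob2E frob_dotE; do 2!(apply: sumr_ge0 => ? _); rewrite -expr2 sqr_ge0.
Qed.

Lemma sqr_entry_le_frob2 A i j : A i j ^+ 2 <= frob2 A.
Proof.
have sqr_sum_ge0 (P : pred 'I_n) (F : 'I_n -> R) : 0 <= \sum_(k | P k) F k * F k.
  by apply: sumr_ge0 => k _; rewrite -expr2 sqr_ge0.
rewrite frob2E frob_dotE (bigD1 i) //= (bigD1 j) //= -expr2 -addrA lerDl.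
by rewrite addr_ge0 // sumr_ge0.
Qed.

Lemma frob2_eq0 A : frob2 A = 0 -> A = 0.
Proof.
move=> A0; apply/matrixP => i j; rewrite mxE; apply/eqP.
by rewrite -sqrf_eq0 eq_le sqr_ge0 andbT -A0 sqr_entry_le_frob2.
Qed.

Lemma frob2Z c A : frob2 (c *: A) = c ^+ 2 * frob2 A.
Proof. by rewrite !frob2E frob_dotZl frob_dotZr mulrA expr2. Qed.

Lemma frob2N A : frob2 (- A) = frob2 A.
Proof. by rewrite -scaleN1r frob2Z sqrrN expr1n mul1r. Qed.

Lemma frob2_subC A B : frob2 (A - B) = frob2 (B - A).
Proof. by rewrite -frob2N opprB. Qed.

Lemma frob2B A B : frob2 (A - B) = frob2 A - 2 * frob_dot A B + frob2 B.
Proof. by rewrite !frob2E !(frob_dotBl, frob_dotBr) (frob_dotC B A); ring. Qed.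

Lemma frob2_le_sub A B : 4 * frob2 A <= frob2 B -> frob2 A <= frob2 (A - B).
Proof.
have := frob2_ge0 (2 *: A - B).
rewrite !frob2B frob2Z frob_dotZl; lra.
Qed.

End FrobeniusProduct.

Section PsdMatrices.
Variables (R : realType) (n : nat).
Implicit Types (A B : 'M[R]_n) (a u v w : 'cV[R]_n).

Definition mxform A u v : R := (u^T *m A *m v) 0 0.

Lemma mxformDl A u v w : mxform A (u + v) w = mxform A u w + mxform A v w.
Proof. by rewrite /mxform linearD !mulmxDl mxE. Qed.

Lemma mxformZl A c u v : mxform A (c *: u) v = c * mxform A u v.
Proof. by rewrite /mxform linearZ -!scalemxAl mxE. Qed.

Lemma mxformDr A u v w : mxform A u (v + w) = mxform A u v + mxform A u w.
Proof. by rewrite /mxform mulmxDr mxE. Qed.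

Lemma mxformZr A c u v : mxform A u (c *: v) = c * mxform A u v.
Proof. by rewrite /mxform -scalemxAr mxE. Qed.

Lemma mxformC A u v : symmx A -> mxform A u v = mxform A v u.
Proof.
move=> symA; rewrite /mxform -[u^T *m A *m v]trmxK [_^T 0 0]mxE.
by rewrite !trmx_mul trmxK symA mulmxA.
Qed.

Lemma mxform_shift A u w k : symmx A ->
  mxform A (u + k *: w) (u + k *: w) =
  mxform A u u + 2 * k * mxform A u w + k ^+ 2 * mxform A w w.
Proof.
move=> symA; rewrite !(mxformDl, mxformDr, mxformZl, mxformZr) (mxformC _ w symA); ring.
Qed.

Lemma mxform_delta A i j : mxform A (delta_mx i 0) (delta_mx j 0) = A i j.
Proof. by rewrite /mxform trmx_delta -rowE -colE !mxE. Qed.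

Lemma frob_dot_outer A v : frob_dot (v *m v^T) A = mxform A v v.
Proof.
rewrite /frob_dot /mxform trmx_mul trmxK mxtrace_mulC mulmxA mxtrace_mulC.
by rewrite trace_mx11 mulmxA.
Qed.

Lemma symmxD A B : symmx A -> symmx B -> symmx (A + B).
Proof. by rewrite /symmx linearD /= => -> ->. Qed.

Lemma symmxB A B : symmx A -> symmx B -> symmx (A - B).
Proof. by rewrite /symmx linearB /= => -> ->. Qed.

Lemma symmxZ c A : symmx A -> symmx (c *: A).
Proof. by rewrite /symmx linearZ /= => ->. Qed.

Lemma psd_mxform_ge0 A v : psd A -> 0 <= mxform A v v.
Proof. by case=> _; apply. Qed.

Lemma mxform_outer a v : mxform (a *m a^T) v v = ((v^T *m a) 0 0) ^+ 2.
Proof.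
rewrite /mxform mulmxA -mulmxA mxE big_ord1 -[a^T *m v]trmxK trmx_mul trmxK.
by rewrite [_^T 0 0]mxE -expr2.
Qed.

Lemma psd0 : psd (0 : 'M[R]_n).
Proof. by split=> [|v]; rewrite ?/symmx ?trmx0 // mulmx0 mul0mx mxE. Qed.

Lemma psdD A B : psd A -> psd B -> psd (A + B).
Proof.
move=> psdA psdB; split; first exact: symmxD psdA.1 psdB.1.
move=> v; rewrite -/(mxform _ v v) -frob_dot_outer frob_dotDr !frob_dot_outer.
by rewrite addr_ge0 ?psd_mxform_ge0.
Qed.

Lemma psdZ c A : 0 <= c -> psd A -> psd (c *: A).
Proof.
move=> c_ge0 psdA; split; first exact: symmxZ psdA.1.
move=> v; rewrite -/(mxform _ v v) -frob_dot_outer frob_dotZr frob_dot_outer.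
by rewrite mulr_ge0 ?psd_mxform_ge0.
Qed.

Lemma psd_outer v : psd (v *m v^T).
Proof.
split; first by rewrite /symmx trmx_mul trmxK.
by move=> w; rewrite -/(mxform _ w w) mxform_outer sqr_ge0.
Qed.

Lemma psd_diag_eq0 A i j : psd A -> A i i = 0 -> A j i = 0.
Proof.
move=> psdA Aii0.
have lin_ge0 k : 0 <= A j j + 2 * k * A j i.
  have := psd_mxform_ge0 (delta_mx j 0 + k *: delta_mx i 0) psdA.
  by rewrite mxform_shift; [rewrite !mxform_delta Aii0 mulr0 addr0 | case: psdA].
apply/eqP; apply: contraT => Aji_neq0.
have : 2 * (- (A j j + 1) / (2 * A j i)) * A j i = - (A j j + 1) by field.
have := lin_ge0 (- (A j j + 1) / (2 * A j i)); lra.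
Qed.

Definition diag_support A : {set 'I_n} := [set i | A i i != 0].

(* When A i i = 0 the inverse is 0 in MathComp, so deflate A i = A. *)
Definition deflate A i : 'M[R]_n := A - (A i i)^-1 *: (col i A *m (col i A)^T).

Lemma psd_deflate A i : psd A -> psd (deflate A i).
Proof.
move=> [symA psdA]; split.
  by rewrite /symmx /deflate linearB linearZ /= trmx_mul trmxK symA.
move=> v; set c := (A i i)^-1; set s := mxform A v (delta_mx i 0).
have c2E : c ^+ 2 * A i i = c.
  have [Aii0|Aii_neq0] := eqVneq (A i i) 0; first by rewrite /c Aii0 invr0 mulr0.
  by rewrite expr2 -mulrA mulVf ?mulr1.
have outerE : mxform (col i A *m (col i A)^T) v v = s ^+ 2.
  by rewrite mxform_outer colE mulmxA.
rewrite -/(mxform (deflate A i) v v) /deflate -!frob_dot_outer frob_dotBr frob_dotZr.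
rewrite !frob_dot_outer outerE -/c.
have := psd_mxform_ge0 (v + (- c * s) *: delta_mx i 0) (conj symA psdA).
rewrite mxform_shift // -/s.
have -> : (- c * s) ^+ 2 * mxform A (delta_mx i 0) (delta_mx i 0) = c * s ^+ 2.
  by rewrite mxform_delta exprMn sqrrN mulrAC c2E.
lra.
Qed.

Lemma psd_diag0 A : psd A -> (forall i, A i i = 0) -> A = 0.
Proof.
by move=> psdA diag0; apply/matrixP => j i; rewrite mxE (psd_diag_eq0 j psdA (diag0 i)).
Qed.

Lemma diag_support_deflate A i :
  psd A -> diag_support (deflate A i) \subset diag_support A :\ i.
Proof.
move=> psdA; apply/fintype.subsetP => j; rewrite !inE.
have -> : deflate A i j j = A j j - (A i i)^-1 * (A j i * A j i).
  by rewrite /deflate !mxE big_ord1 !mxE.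
move=> deflate_jj_neq0; apply/andP; split.
  apply: contraNneq deflate_jj_neq0 => ->.
  have [->|Aii_neq0] := eqVneq (A i i) 0; first by rewrite !mulr0 subr0.
  by rewrite mulKf ?subrr.
apply: contraNneq deflate_jj_neq0 => Ajj0.
have Aij0 := psd_diag_eq0 i psdA Ajj0.
have [symA _] := psdA.
have -> : A j i = A i j by rewrite -[in LHS]symA mxE.
by rewrite Ajj0 Aij0 mulr0 mulr0 subr0.
Qed.

Lemma psd_sum_outer A : psd A -> exists s : seq 'cV[R]_n, A = \sum_(v <- s) v *m v^T.
Proof.
have [k] : exists k, (#|diag_support A| < k)%N by exists #|diag_support A|.+1.
elim: k A => // k IH A supp_lt psdA.
have [card0|/card_gt0P [i i_supp]] := posnP #|diag_support A|.
  exists [::]; rewrite big_nil; apply: psd_diag0 => // i.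
  by have /card0_eq/(_ i) := card0; rewrite !inE => /negbFE/eqP.
have Aii_gt0 : 0 < A i i.
  rewrite lt_def; move: i_supp; rewrite inE => -> /=.
  by rewrite -mxform_delta psd_mxform_ge0.
have [|s deflateE] := IH (deflate A i) _ (psd_deflate i psdA).
  apply: leq_ltn_trans (subset_leq_card (diag_support_deflate i psdA)) _.
  by move: supp_lt; rewrite (cardsD1 i) i_supp.
exists (Num.sqrt (A i i)^-1 *: col i A :: s); rewrite big_cons -deflateE /deflate.
rewrite linearZ /= -scalemxAl -scalemxAr scalerA -expr2 sqr_sqrtr ?invr_ge0 ?ltW //.
by rewrite addrC subrK.
Qed.

Lemma frob_dot_psd_ge0 A B : psd A -> psd B -> 0 <= frob_dot A B.
Proof.
move=> /psd_sum_outer [s ->] psdB; elim: s => [|v s IH].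
  by rewrite big_nil frob_dot0l.
by rewrite big_cons frob_dotDl addr_ge0 // frob_dot_outer psd_mxform_ge0.
Qed.

End PsdMatrices.

Lemma ler0_quad_perturb (R : realFieldType) (a b : R) :
  (forall s, 0 < s < 1 -> 2 * s * a <= s ^+ 2 * b) -> a <= 0.
Proof.
move=> perturb; rewrite leNgt; apply/negP => a_gt0.
have b_ge0 := normr_ge0 b.
have den_gt0 : 0 < 2 * a + `|b| by lra.
pose s := a / (2 * a + `|b|).
have sE : s * (2 * a + `|b|) = a by rewrite mulfVK ?gt_eqF.
have s_gt0 : 0 < s by rewrite divr_gt0.
have s_lt1 : s < 1 by rewrite ltr_pdivrMr // mul1r; lra.
have := perturb s; rewrite s_gt0 s_lt1 => /(_ isT).
have := ler_norm b; nra.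
Qed.

Section ConvexProjection.
Variables (R : realType) (n : nat) (K : set 'M[R]_n).
Hypothesis K_convex :
  forall A B s, 0 <= s <= 1 -> K A -> K B -> K (A + s *: (B - A)).

Lemma is_projP Z P :
  is_proj K Z P <-> K P /\ forall Y, K Y -> frob_dot (Z - P) (Y - P) <= 0.
Proof.
split=> [[KP P_min]|[KP P_var]]; split=> // Y KY.
  apply: (@ler0_quad_perturb _ _ (frob2 (Y - P))) => s /andP[s_gt0 s_lt1].
  have s01 : 0 <= s <= 1 by rewrite !ltW.
  have := P_min _ (K_convex s01 KP KY).
  rewrite opprD addrA [frob2 (_ - s *: _)]frob2B frob2Z frob_dotZr; lra.
have -> : Z - Y = (Z - P) - (Y - P) by rewrite opprB addrA subrK.
rewrite [frob2 (_ - (Y - P))]frob2B; have := P_var _ KY; have := frob2_ge0 (Y - P); lra.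
Qed.

Lemma is_proj_nonexpansive Z1 Z2 P1 P2 :
  is_proj K Z1 P1 -> is_proj K Z2 P2 -> frob2 (P1 - P2) <= frob2 (Z1 - Z2).
Proof.
move=> /is_projP[KP1 var1] /is_projP[KP2 var2].
have := var1 _ KP2; have := var2 _ KP1.
have := frob2_ge0 ((Z1 - Z2) - (P1 - P2)).
rewrite !frob2E !(frob_dotBl, frob_dotBr) (frob_dotC P2 P1) (frob_dotC P1 Z1).
rewrite (frob_dotC P2 Z1) (frob_dotC P1 Z2) (frob_dotC P2 Z2) (frob_dotC Z2 Z1); lra.
Qed.

Lemma is_proj_unique Z P1 P2 : is_proj K Z P1 -> is_proj K Z P2 -> P1 = P2.
Proof.
move=> proj1 proj2; apply/eqP; rewrite -subr_eq0; apply/eqP/frob2_eq0.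
apply/eqP; rewrite eq_le frob2_ge0 andbT.
by have := is_proj_nonexpansive proj1 proj2; rewrite subrr [frob2 0]frob2E frob_dot0l.
Qed.

End ConvexProjection.

Section ConeProjection.
Variables (R : realType) (n : nat) (K : set 'M[R]_n).
Hypotheses (K_add : forall A B, K A -> K B -> K (A + B))
           (K_scale : forall c A, 0 <= c -> K A -> K (c *: A)).

Lemma cone_convex A B s : 0 <= s <= 1 -> K A -> K B -> K (A + s *: (B - A)).
Proof.
move=> /andP[s_ge0 s_le1] KA KB.
have -> : A + s *: (B - A) = (1 - s) *: A + s *: B.
  by rewrite scalerBr scalerBl scale1r addrA addrAC.
by apply: K_add; apply: K_scale; rewrite // subr_ge0.
Qed.

Lemma is_proj_coneP Z P : is_proj K Z P <->
  [/\ K P, frob_dot (Z - P) P = 0 & forall Y, K Y -> frob_dot (Z - P) Y <= 0].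
Proof.
rewrite (is_projP cone_convex); split=> [[KP P_var]|[KP P_orth P_polar]].
  have K0 : K 0 by rewrite -(scale0r P); exact: K_scale.
  have := P_var _ K0; have := P_var (2 *: P) (K_scale (ler0n _ 2) KP).
  rewrite sub0r frob_dotNr frob_dotBr frob_dotZr => P_le0 P_ge0.
  split=> // [|Y KY]; first by lra.
  by have := P_var _ (K_add KY KP); rewrite addrK.
by split=> // Y KY; rewrite frob_dotBr P_orth subr0 P_polar.
Qed.

Lemma is_proj_cone_rescale Z P r s : 0 <= r -> 0 <= s ->
  is_proj K Z P -> is_proj K (s *: P + r *: (Z - P)) (s *: P).
Proof.
move=> r_ge0 s_ge0 /is_proj_coneP[KP P_orth P_polar]; apply/is_proj_coneP.
rewrite addrAC subrr add0r frob_dotZl frob_dotZr P_orth !mulr0; split=> // [|Y KY].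
  exact: K_scale.
by rewrite frob_dotZl mulr_ge0_le0 ?P_polar.
Qed.

End ConeProjection.

Section PsdProjection.
Variables (R : realType) (n : nat).
Implicit Types (A B P Y Z : 'M[R]_n).

Lemma vec_mx_entry (v : 'rV[R]_(n * n)) i j : vec_mx v i j = v 0 (mxvec_index i j).
Proof. by rewrite -{2}(vec_mxK v) mxvecE. Qed.

Lemma continuous_vec_mx : continuous (@vec_mx R n n).
Proof.
move=> v A /nbhs_ballP[e e_gt0 ballA]; apply/nbhs_ballP; exists e => // w [_ vw].
by apply: ballA; split=> // i j; rewrite !vec_mx_entry; exact: vw.
Qed.

Lemma continuous_frob2 : continuous (@frob2 R n).
Proof.
have -> : @frob2 R n = fun A => \sum_i \sum_j A i j * A i j.
  by apply/funext => A; rewrite frob2E frob_dotE.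
apply: continuous_big => [|i _]; first exact: add_continuous.
apply: continuous_big => [|j _]; first exact: add_continuous.
by move=> A; apply: continuousM; exact: coord_continuous.
Qed.

Lemma continuous_frob_dot B : continuous (@frob_dot R n B).
Proof.
have -> : @frob_dot R n B = fun A => \sum_i \sum_j B i j * A i j.
  by apply/funext => A; rewrite frob_dotE.
apply: continuous_big => [|i _]; first exact: add_continuous.
apply: continuous_big => [|j _]; first exact: add_continuous.
by move=> A; apply: continuousM; [exact: cst_continuous | exact: coord_continuous].
Qed.

Lemma closed_psd : closed [set A : 'M[R]_n | psd A].
Proof.
have -> : [set A | psd A] =
    \bigcap_(p in [set: 'I_n * 'I_n]) [set A : 'M[R]_n | A p.1 p.2 - A p.2 p.1 = 0] `&`
    \bigcap_(v in [set: 'cV[R]_n]) [set A | 0 <= frob_dot (v *m v^T) A].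
  apply/seteqP; split=> A.
    move=> [symA psdA]; split=> [p _|v _] /=; last by rewrite frob_dot_outer psdA.
    by rewrite -{1}symA mxE subrr.
  move=> [symA psdA]; split=> [|v]; last by rewrite -/(mxform _ v v) -frob_dot_outer psdA.
  apply/matrixP => i j; rewrite mxE; apply/eqP; rewrite -subr_eq0.
  by apply/eqP; exact: (symA (j, i)).
apply: closedI; apply: closed_bigI => x _.
  apply: (@preimage_closed _ _ (fun A : 'M[R]_n => A x.1 x.2 - A x.2 x.1) [set 0]).
    by move=> A _; apply: continuousB; exact: coord_continuous.
  exact: closed_eq.
apply: (@preimage_closed _ _ (frob_dot (x *m x^T)) [set r | 0 <= r]).
  by move=> A _; exact: continuous_frob_dot.
exact: closed_ge.
Qed.

Lemma compact_frob2_le c : compact [set A : 'M[R]_n | frob2 A <= c].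
Proof.
pose box := [set v : 'rV[R]_(n * n) | forall k, `[- (c + 1), c + 1]%classic (v 0 k)].
have box_compact : compact box.
  by apply: (@rV_compact _ _ (fun=> `[- (c + 1), c + 1]%classic)) => k; exact: segment_compact.
have image_compact :=
  continuous_compact (continuous_subspaceT continuous_vec_mx) box_compact.
apply: (subclosed_compact _ image_compact).
  apply: (@preimage_closed _ _ (@frob2 R n) [set r | r <= c]); last exact: closed_le.
  by move=> A _; exact: continuous_frob2.
move=> A /= A_le; exists (mxvec A); last exact: mxvecK.
move=> k; case/mxvec_indexP: k => i j; rewrite mxvecE /= in_itv /=.
have := sqr_entry_le_frob2 A i j; have := frob2_ge0 A; rewrite expr2 => *.
by apply/andP; split; nra.
Qed.

Lemma is_proj_psd_exists Z : exists P, is_proj (@psd R n) Z P.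
Proof.
(* Outside this ball every Y is farther from Z than 0 is (frob2_le_sub). *)
pose S := [set A : 'M[R]_n | frob2 A <= 4 * frob2 Z] `&` [set A | psd A].
have S0 : S 0 by split; rewrite /= ?frob2E ?frob_dot0l ?mulr_ge0 ?frob2_ge0 //; exact: psd0.
have S_compact : compact S := compact_closedI (@compact_frob2_le _) closed_psd.
have dist_cont : {within S, continuous (fun A => frob2 (Z - A))}.
  have sub_cont : continuous (fun A : 'M[R]_n => Z - A).
    by move=> A; apply: continuousB; [exact: cst_continuous | exact: cvg_id].
  apply: continuous_subspaceT => A.
  by apply: continuous_comp (sub_cont A) _; exact: continuous_frob2.
have [P /set_mem[_ psdP] P_min] := compact_EVT_min (ex_intro _ _ S0) S_compact dist_cont.
exists P; split=> // Y psdY.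
have [Y_le|Y_gt] := lerP (frob2 Y) (4 * frob2 Z); first exact/P_min/mem_set.
apply: le_trans (P_min 0 (mem_set S0)) _; rewrite subr0.
exact/frob2_le_sub/ltW.
Qed.

End PsdProjection.

Section MoreauDecomposition.
Variables (R : realType) (n : nat).
Implicit Types (A B P Y Z : 'M[R]_n).

Lemma nsdD A B : nsd A -> nsd B -> nsd (A + B).
Proof. by rewrite /nsd opprD; exact: psdD. Qed.

Lemma nsdZ c A : 0 <= c -> nsd A -> nsd (c *: A).
Proof. by rewrite /nsd -scalerN; exact: psdZ. Qed.

Lemma is_proj_psd_opp Z P : is_proj (@psd R n) (- Z) P -> is_proj (@nsd R n) Z (- P).
Proof.
move=> [psdP P_min]; split=> [|Y nsdY]; first by rewrite /nsd opprK.
have -> : frob2 (Z - - P) = frob2 (- Z - P) by rewrite -frob2N opprD opprK.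
by rewrite -[frob2 (Z - Y)]frob2N opprD P_min.
Qed.

Lemma is_proj_PiP Z : is_proj (@psd R n) Z (PiP Z).
Proof. by apply: xgetPex; exact: is_proj_psd_exists. Qed.

Lemma is_proj_PiN Z : is_proj (@nsd R n) Z (PiN Z).
Proof.
apply: xgetPex; have [P] := is_proj_psd_exists (- Z).
by move/is_proj_psd_opp; exists (- P).
Qed.

Lemma PiP_eq Z P : is_proj (@psd R n) Z P -> PiP Z = P.
Proof. exact: (is_proj_unique (cone_convex (@psdD R n) (@psdZ R n)) (is_proj_PiP Z)). Qed.

Lemma PiN_eq Z P : is_proj (@nsd R n) Z P -> PiN Z = P.
Proof. exact: (is_proj_unique (cone_convex nsdD nsdZ) (is_proj_PiN Z)). Qed.

Lemma is_proj_nsd_moreau Z : symmx Z -> is_proj (@nsd R n) Z (Z - PiP Z).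
Proof.
move=> symZ; have := is_proj_PiP Z.
move=> /(is_proj_coneP (@psdD R n) (@psdZ R n)) [psdP P_orth P_polar].
apply/(is_proj_coneP nsdD nsdZ); rewrite subKr; split.
- split=> [|v]; first by rewrite opprB; exact: symmxB psdP.1 symZ.
  rewrite -/(mxform _ v v) -frob_dot_outer frob_dotNr frob_dotC oppr_ge0.
  exact/P_polar/psd_outer.
- by rewrite frob_dotC.
- by move=> Y nsdY; rewrite -[Y]opprK frob_dotNr oppr_le0 frob_dot_psd_ge0.
Qed.

Lemma PiP_nonexpansive A B : frob2 (PiP A - PiP B) <= frob2 (A - B).
Proof.
exact: (is_proj_nonexpansive (cone_convex (@psdD R n) (@psdZ R n))
                             (is_proj_PiP A) (is_proj_PiP B)).
Qed.

Lemma PiN_nonexpansive A B : frob2 (PiN A - PiN B) <= frob2 (A - B).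
Proof.
exact: (is_proj_nonexpansive (cone_convex nsdD nsdZ) (is_proj_PiN A) (is_proj_PiN B)).
Qed.

Lemma PiN_moreau Z : symmx Z -> PiN Z = Z - PiP Z.
Proof. by move=> symZ; apply/PiN_eq/is_proj_nsd_moreau. Qed.

Lemma PiP_rescale Y r : symmx Y -> 0 <= r -> PiP (PiP Y + r *: PiN Y) = PiP Y.
Proof.
move=> symY r_ge0; apply: PiP_eq; rewrite PiN_moreau //.
have := is_proj_cone_rescale (@psdD R n) (@psdZ R n) r_ge0 ler01 (is_proj_PiP Y).
by rewrite scale1r.
Qed.

Lemma PiN_rescale Y r : symmx Y -> 0 <= r -> PiN (PiP Y + r *: PiN Y) = r *: PiN Y.
Proof.
move=> symY r_ge0; apply: PiN_eq.
have := is_proj_cone_rescale nsdD nsdZ ler01 r_ge0 (is_proj_PiN Y).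
by rewrite scale1r [in Y - _]PiN_moreau // subKr addrC.
Qed.

End MoreauDecomposition.

Section DirectionalDerivative.
Variables (R : realType) (n : nat).

Lemma cvg_frob2_0P (T : Type) (F : set_system T) {FF : Filter F} (f : T -> 'M[R]_n) :
  frob2 (f t) @[t --> F] --> (0 : R) <-> forall i j, f t i j @[t --> F] --> (0 : R).
Proof.
split=> [frob2_cvg0 i j|entries_cvg0].
  have sqrt_cvg0 : Num.sqrt (frob2 (f t)) @[t --> F] --> (0 : R).
    by rewrite -sqrtr0; apply: continuous_cvg frob2_cvg0; exact: sqrt_continuous.
  apply: (@squeeze_cvgr _ _ _ _ (fun t => - Num.sqrt (frob2 (f t)))
                                (fun t => Num.sqrt (frob2 (f t)))).
  - near=> t; rewrite -ler_norml -sqrtr_sqr ler_sqrt ?frob2_ge0 //.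
    exact: sqr_entry_le_frob2.
  - by rewrite -oppr0; apply: cvgN.
  - exact: sqrt_cvg0.
have -> : (0 : R) = \sum_(i < n) \sum_(j < n) 0 * 0.
  by rewrite big1 // => i _; rewrite big1 // mulr0.
under eq_fun do rewrite frob2E frob_dotE.
apply: cvg_big => [|i _]; first exact: add_continuous.
apply: cvg_big => [|j _]; first exact: add_continuous.
exact: cvgM.
Unshelve. all: by end_near.
Qed.

Lemma is_dirder_curve (F : 'M[R]_n -> 'M[R]_n) (Z H D : 'M[R]_n) (V : R -> 'M[R]_n) :
  (forall A B, frob2 (F A - F B) <= frob2 (A - B)) ->
  (forall i j, (t^-1 *: (V t - Z)) i j @[t --> (0 : R)^'+] --> H i j) ->
  (forall i j, (t^-1 *: (F (V t) - F Z)) i j @[t --> (0 : R)^'+] --> D i j) ->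
  is_dirder F Z H D.
Proof.
move=> F_nonexp V_tangent FV_dirder i j.
pose E t := t^-1 *: (V t - (Z + t *: H)).
have E_cvg0 : frob2 (E t) @[t --> (0 : R)^'+] --> (0 : R).
  apply/cvg_frob2_0P => k l; rewrite -[X in _ --> X](subrr (H k l)).
  have E_near : {near (0 : R)^'+,
    (fun t => (t^-1 *: (V t - Z)) k l - H k l) =1 (fun t => E t k l)}.
    near=> t; have t_neq0 : t != 0 by apply/lt0r_neq0; near: t; exact: nbhs_right_gt.
    by rewrite /E !mxE; field.
  apply: cvg_trans (near_eq_cvg E_near) _.
  by apply: cvgB; [exact: V_tangent | exact: cvg_cst].
pose G t := t^-1 *: (F (Z + t *: H) - F (V t)).
have G_cvg0 : forall k l, G t k l @[t --> (0 : R)^'+] --> (0 : R).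
  apply/cvg_frob2_0P; apply: squeeze_cvgr (cvg_cst 0) E_cvg0.
  by near=> t; rewrite frob2_ge0 /G /E !frob2Z frob2_subC ler_wpM2l ?sqr_ge0 ?F_nonexp.
rewrite -[X in _ --> X]add0r.
have dirder_near : {near (0 : R)^'+, (fun t => G t i j + (t^-1 *: (F (V t) - F Z)) i j) =1
    (fun t => (t^-1 *: (F (Z + t *: H) - F Z)) i j)}.
  by near=> t; rewrite /G !mxE; ring.
apply: cvg_trans (near_eq_cvg dirder_near) _.
by apply: cvgD; [exact: G_cvg0 | exact: FV_dirder].
Unshelve. all: by end_near.
Qed.

End DirectionalDerivative.

Lemma symmx_Zstar (R : realType) (n m : nat) (C : 'M[R]_n) (As : 'I_m -> 'M[R]_n)
    (b : 'cV[R]_m) tau Z :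
  Zstar C As b tau Z -> symmx Z.
Proof.
move=> [X [S [[y [S' [_ _ psdX _ _]]] [X' [y' [_ _ _ psdS _]]] ->]]].
exact: symmxB psdX.1 (symmxZ _ psdS.1).
Qed.

Unset Implicit Arguments.

Theorem lemma9p1 (R : realType) (n m : nat)
  (C : 'M[R]_n) (As : 'I_m -> 'M[R]_n) (b : 'cV[R]_m)
  (hC : symmx C) (hA : forall i, symmx (As i))
  (A1 : A_surj As) (A2 : strict_compl C As b)
  (sigma sigma' : R) (hs : 0 < sigma) (hs' : 0 < sigma')
  (Zb Hb DP DN : 'M[R]_n)
  (hZ : Zstar C As b sigma Zb) (hH : symmx Hb)
  (hDP : is_dirder (@PiP R n) Zb Hb DP)
  (hDN : is_dirder (@PiN R n) Zb Hb DN)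
  (hcrit : - Pop As DP - Pperp As DN = 0) :
  let Xb := PiP Zb in
  let Sb := - sigma^-1 *: PiN Zb in
  let Zb' := Xb - sigma' *: Sb in
  let Hb' := DP + (sigma' / sigma) *: DN in
  is_dirder (@PiP R n) Zb' Hb' DP /\
  is_dirder (@PiN R n) Zb' Hb' ((sigma' / sigma) *: DN).
Proof.
move=> Xb Sb Zb' Hb'; set r := sigma' / sigma.
have r_ge0 : 0 <= r by rewrite divr_ge0 ?ltW.
have symZ := symmx_Zstar hZ.
have symY t : symmx (Zb + t *: Hb) := symmxD symZ (symmxZ t hH).
have Zb'E : Zb' = PiP Zb + r *: PiN Zb by rewrite /Zb' /Sb scalerA mulrN scaleNr opprK.
pose V t := PiP (Zb + t *: Hb) + r *: PiN (Zb + t *: Hb).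
have V_tangent i j : (t^-1 *: (V t - Zb')) i j @[t --> (0 : R)^'+] --> Hb' i j.
  have -> : (fun t => (t^-1 *: (V t - Zb')) i j) = fun t =>
      (t^-1 *: (PiP (Zb + t *: Hb) - PiP Zb)) i j
      + r * (t^-1 *: (PiN (Zb + t *: Hb) - PiN Zb)) i j.
    by apply/funext => t; rewrite Zb'E !mxE; ring.
  by rewrite !mxE; apply: cvgD; [exact: hDP | apply: cvgM; [exact: cvg_cst | exact: hDN]].
split; apply: (is_dirder_curve _ V_tangent).
- exact: PiP_nonexpansive.
- move=> i j; rewrite Zb'E PiP_rescale //.
  by under eq_fun do rewrite PiP_rescale //; exact: hDP.
- exact: PiN_nonexpansive.
- move=> i j; rewrite Zb'E PiN_rescale //.
  under eq_fun do rewrite PiN_rescale // -scalerBr scalerA mulrC -scalerA mxE.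
  by rewrite mxE; apply: cvgM; [exact: cvg_cst | exact: hDN].
Qed.
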